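(* Let $\mathrm{M}$ be a simple matroid on a finite set $E$ and $\mathcal{G}$ a building set of its lattice of flats such that $(\mathrm{M},\mathcal{G})$ is flag, and let $e\in E$. Then the deletion $(\mathrm{M}\setminus e,\mathcal{G}\setminus e)$ is flag, where $\mathcal{G}\setminus e=\{S\in\mathcal{L}(\mathrm{M}\setminus e):\operatorname{cl}_{\mathrm{M}}(S)\in\mathcal{G}\}$.
   Context: Flats are ordered by inclusion, $\hat0=\varnothing$, $F\vee G=\operatorname{cl}(F\cup G)$. A building set of a geometric lattice $\mathcal{L}$ is $\mathcal{G}\subseteq\mathcal{L}\setminus\{\hat0\}$ such that for every $F\neq\hat0$ the join map $\prod_{G\in\max\mathcal{G}_{\leqslant F}}[\hat0,G]\to[\hat0,F]$ is a poset isomorphism. $\mathcal{G}\setminus e$ is a building set of $\mathcal{L}(\mathrm{M}\setminus e)$. $\mathcal{S}\subseteq\mathcal{G}$ is nested if for every antichain $A\subseteq\mathcal{S}$ and every $\{S_1,\dots,S_k\}\subseteq A$, $k\geqslant2$, $S_1\vee\dots\vee S_k\notin\mathcal{G}$. $\mathbf{N}(\mathcal{L},\mathcal{G})$ denotes the simplicial complex of nested sets contained in $\mathcal{G}\setminus\max\mathcal{G}$; a built matroid is flag if this complex is flag (all minimal non-faces have size $2$). *)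

From mathcomp Require Import all_boot.
Set Implicit Arguments. Unset Strict Implicit. Unset Printing Implicit Defensive.

Section Matroids.
Variable T : finType.

Definition is_matroid (E : {set T}) (indep : {set T} -> bool) : Prop :=
  [/\ indep set0,
      (forall I : {set T}, indep I -> I \subset E),
      (forall I J : {set T}, J \subset I -> indep I -> indep J) &
      (forall I J : {set T}, indep I -> indep J -> #|I| < #|J| ->
          exists2 x, x \in J :\: I & indep (x |: I))].

Definition rk (indep : {set T} -> bool) (A : {set T}) : nat :=
  \max_(I : {set T} | (I \subset A) && indep I) #|I|.

Definition cl (E : {set T}) (indep : {set T} -> bool) (A : {set T}) : {set T} :=
  [set x in E | rk indep (x |: A) == rk indep A].

Definition is_flat (E : {set T}) (indep : {set T} -> bool) (F : {set T}) : bool :=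
  (F \subset E) && (cl E indep F == F).

(* simple = no loops and no parallel elements *)
Definition is_simple (E : {set T}) (indep : {set T} -> bool) : Prop :=
  forall x y, x \in E -> y \in E -> indep [set x; y].

Definition del_ground (E : {set T}) (e : T) : {set T} := E :\ e.
Definition del_indep (indep : {set T} -> bool) (e : T) : {set T} -> bool :=
  fun I => indep I && (e \notin I).

Definition fjoin (E : {set T}) (indep : {set T} -> bool) (B : {set {set T}}) : {set T} :=
  cl E indep (\bigcup_(X in B) X).

Definition max_below (G : {set {set T}}) (F : {set T}) : {set {set T}} :=
  [set X in G | (X \subset F) &&
     [forall Y in G, (Y \subset F) && (X \subset Y) ==> (Y == X)]].

(* building set of the lattice of flats, 0 = set0 *)
Definition is_building (E : {set T}) (indep : {set T} -> bool) (G : {set {set T}}) : Prop :=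
  (forall X : {set T}, X \in G -> is_flat E indep X && (X != set0)) /\
  forall F : {set T}, is_flat E indep F -> F != set0 ->
    let mx := max_below G F in
    let adm := fun x : {set T} -> {set T} =>
       forall X : {set T}, X \in mx -> is_flat E indep (x X) /\ x X \subset X in
    let jn := fun x : {set T} -> {set T} =>
       cl E indep (\bigcup_(X in mx) x X) in
    (* order embedding of the product into [0, F] *)
    (forall x y, adm x -> adm y ->
        (jn x \subset jn y <-> forall X : {set T}, X \in mx -> x X \subset y X)) /\
    (* surjectivity onto [0, F] *)
    (forall H : {set T}, is_flat E indep H -> H \subset F ->
        exists2 x, adm x & jn x = H).

Definition is_antichain (A : {set {set T}}) : bool :=
  [forall X in A, forall Y in A, (X \subset Y) ==> (X == Y)].

Definition is_nested (E : {set T}) (indep : {set T} -> bool) (G S : {set {set T}}) : Prop :=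
  S \subset G /\
  forall A : {set {set T}}, A \subset S -> is_antichain A ->
    forall B : {set {set T}}, B \subset A -> 2 <= #|B| -> fjoin E indep B \notin G.

Definition maxG (G : {set {set T}}) : {set {set T}} :=
  [set X in G | [forall Y in G, (X \subset Y) ==> (Y == X)]].

(* the complex N(L,G): nested sets contained in G \ max G; flag = every
   minimal non-face has exactly two elements *)
Definition is_flag (E : {set T}) (indep : {set T} -> bool) (G : {set {set T}}) : Prop :=
  forall X : {set {set T}}, X \subset G :\: maxG G ->
    ~ is_nested E indep G X ->
    (forall Y : {set {set T}}, Y \proper X -> is_nested E indep G Y) ->
    #|X| = 2.

Definition del_building (E : {set T}) (indep : {set T} -> bool) (G : {set {set T}}) (e : T) : {set {set T}} :=
  [set S | is_flat (del_ground E e) (del_indep indep e) S &&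
           (cl E indep S \in G)].

End Matroids.

(* The closure map S |-> cl_M(S) embeds G\e into G: it is injective with
   inverse F |-> F \ e, it preserves and reflects inclusion, and it turns joins
   in the lattice of flats of M\e into joins in that of M, so that a join of
   members of G\e lies in G\e exactly when the join of their closures lies in G.
   Hence a set of members of G\e is nested iff its image is nested, and the
   image of a non-maximal member is non-maximal.  A minimal non-nested subset
   of (G\e) \ max(G\e) is thus mapped to a minimal non-nested subset of
   G \ max G of the same size, which has size 2 since (M,G) is flag. *)

From mathcomp Require Import all_boot zify.

Set Implicit Arguments. Unset Strict Implicit. Unset Printing Implicit Defensive.

Section ImsetPreimage.
Variables (aT rT : finType) (f : aT -> rT).

Lemma imset_preimsetI (W : {set aT}) (V : {set rT}) :
  V \subset f @: W -> f @: (W :&: f @^-1: V) = V.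
Proof.
move=> sVfW; apply/setP => y; apply/idP/idP => [/imsetP[x] | Vy].
  by rewrite !inE => /andP[_ Vfx] ->.
have /imsetP[x Wx yE] := subsetP sVfW y Vy.
by rewrite yE imset_f // !inE Wx -yE.
Qed.

Lemma proper_imsetP (X : {set aT}) (Z : {set rT}) :
  Z \proper f @: X -> exists2 W : {set aT}, W \proper X & Z = f @: W.
Proof.
move=> ltZfX; have sZfX := proper_sub ltZfX.
exists (X :&: f @^-1: Z); last by rewrite imset_preimsetI.
rewrite properEneq subsetIl andbT; apply: contraTneq ltZfX => eqW.
by rewrite -eqW imset_preimsetI // properxx.
Qed.

End ImsetPreimage.

Section Matroid.
Variables (T : finType) (E : {set T}) (indep : {set T} -> bool).
Hypothesis hM : is_matroid E indep.

Lemma indep0 : indep set0.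
Proof. by case: hM. Qed.

Lemma indep_sub_ground (I : {set T}) : indep I -> I \subset E.
Proof. by case: hM => _ + _ _; apply. Qed.

Lemma indepS (I J : {set T}) : J \subset I -> indep I -> indep J.
Proof. by case: hM => _ _ + _; apply. Qed.

Lemma indep_augment (I J : {set T}) : indep I -> indep J -> #|I| < #|J| ->
  exists2 x, x \in J :\: I & indep (x |: I).
Proof. by case: hM => _ _ _; apply. Qed.

Lemma card_indep_le_rk (I A : {set T}) : I \subset A -> indep I -> #|I| <= rk indep A.
Proof.
by move=> sIA indI; apply: (leq_bigmax_cond (F := fun J : {set T} => #|J|)); rewrite sIA.
Qed.

Definition basis_of (A I : {set T}) := [&& I \subset A, indep I & #|I| == rk indep A].

Lemma basis_exists (A : {set T}) : exists I, basis_of A I.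
Proof.
have : 0 < #|[pred J : {set T} | (J \subset A) && indep J]|.
  by apply/card_gt0P; exists set0; rewrite inE sub0set indep0.
case/(eq_bigmax_cond (fun J : {set T} => #|J|)) => I; rewrite inE => /andP[sIA indI] rkA.
by exists I; rewrite /basis_of sIA indI /= /rk rkA.
Qed.

Lemma rkS (A B : {set T}) : A \subset B -> rk indep A <= rk indep B.
Proof.
move=> sAB; have [I /and3P[sIA indI /eqP <-]] := basis_exists A.
exact: card_indep_le_rk (subset_trans sIA sAB) indI.
Qed.

Lemma basis_extend (I B : {set T}) : I \subset B -> indep I ->
  exists2 J : {set T}, I \subset J & basis_of B J.
Proof.
move=> sIB indI; have rkI := card_indep_le_rk sIB indI.
move: {2}(rk indep B - #|I|) (erefl (rk indep B - #|I|)) => n.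
elim: n I sIB indI rkI => [|n IHn] I sIB indI rkI gap.
  by exists I; rewrite // /basis_of sIB indI eqn_leq rkI; lia.
have [K /and3P[sKB indK /eqP cardK]] := basis_exists B.
have [|z /setDP[Kz zNI] indzI] := indep_augment indI indK; first by lia.
have szIB : z |: I \subset B by rewrite subUset sub1set (subsetP sKB).
have [|J sIJ basJ] := IHn (z |: I) szIB indzI (card_indep_le_rk szIB indzI).
  by rewrite cardsU1 zNI; lia.
by exists J; rewrite // (subset_trans _ sIJ) ?subsetUr.
Qed.

Lemma rk_setU1_gt (A I : {set T}) x : basis_of A I ->
  (rk indep A < rk indep (x |: A)) = (x \notin I) && indep (x |: I).
Proof.
case/and3P=> sIA indI /eqP cardI; apply/idP/andP => [ltA | [xNI indxI]].
  have [K /and3P[sKxA indK /eqP cardK]] := basis_exists (x |: A).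
  have [|z /setDP[Kz zNI] indzI] := indep_augment indI indK; first by rewrite cardI cardK.
  suff zx : z = x by rewrite -zx.
  move: (subsetP sKxA z Kz); rewrite in_setU1 => /orP[/eqP // | Az].
  have szIA : z |: I \subset A by rewrite subUset sub1set Az sIA.
  by have := card_indep_le_rk szIA indzI; rewrite cardsU1 zNI -cardI; lia.
have := card_indep_le_rk (setUS [set x] sIA) indxI.
by rewrite cardsU1 xNI -cardI.
Qed.

Local Notation clM := (cl E indep).

Lemma cl_sub_ground (A : {set T}) : clM A \subset E.
Proof. by apply/subsetP => x; rewrite inE => /andP[]. Qed.

Lemma mem_cl (A : {set T}) y : y \in A -> y \in E -> y \in clM A.
Proof.
move=> Ay Ey; have /setUidPr yAA : [set y] \subset A by rewrite sub1set.
by rewrite inE Ey yAA eqxx.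
Qed.

Lemma subset_cl (A : {set T}) : A \subset E -> A \subset clM A.
Proof. by move=> sAE; apply/subsetP => y Ay; rewrite mem_cl ?(subsetP sAE). Qed.

Lemma clS (A B : {set T}) : A \subset B -> clM A \subset clM B.
Proof.
move=> sAB; apply/subsetP => x; rewrite !inE => /andP[-> /eqP rkxA] /=.
rewrite eqn_leq (rkS (subsetUr _ B)) andbT leqNgt; apply/negP => ltB.
have [I basI] := basis_exists A; have /and3P[sIA indI _] := basI.
have [J sIJ basJ] := basis_extend (subset_trans sIA sAB) indI.
move: ltB; rewrite (rk_setU1_gt _ basJ) => /andP[xNJ indxJ].
have /negP[] : ~~ (rk indep A < rk indep (x |: A)) by rewrite rkxA ltnn.
rewrite (rk_setU1_gt _ basI) (contra (subsetP sIJ x) xNJ) /=.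
exact: indepS (setUS _ sIJ) indxJ.
Qed.

Lemma rk_cl (A : {set T}) : rk indep (clM A) <= rk indep A.
Proof.
have [I basI] := basis_exists A; have /and3P[_ indI /eqP <-] := basI.
have [K /and3P[sK indK /eqP <-]] := basis_exists (clM A).
rewrite leqNgt; apply/negP => /(indep_augment indI indK)[z /setDP[Kz zNI] indzI].
move: (subsetP sK z Kz); rewrite inE => /andP[_ /eqP rkzA].
by move: (rk_setU1_gt z basI); rewrite zNI indzI rkzA ltnn.
Qed.

Lemma cl_idem (A : {set T}) : clM (clM A) \subset clM A.
Proof.
apply/subsetP => x; rewrite !inE => /andP[-> /eqP rkxclA] /=.
rewrite eqn_leq (rkS (subsetUr _ A)) andbT leqNgt; apply/negP.
have [I basI] := basis_exists A; have /and3P[sIA indI /eqP cardI] := basI.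
rewrite (rk_setU1_gt _ basI) => /andP[xNI indxI].
have sIclA : I \subset clM A := subset_trans (subset_cl (indep_sub_ground indI)) (clS sIA).
have := card_indep_le_rk (setUS [set x] sIclA) indxI.
by rewrite rkxclA cardsU1 xNI cardI; have := rk_cl A; lia.
Qed.

Lemma cl_between (A B : {set T}) : A \subset B -> B \subset clM A -> clM B = clM A.
Proof.
move=> sAB sBclA; apply/eqP; rewrite eqEsubset (clS sAB) andbT.
exact: subset_trans (clS sBclA) (cl_idem A).
Qed.

End Matroid.

Lemma rk_del (T : finType) (indep : {set T} -> bool) e (A : {set T}) :
  e \notin A -> rk (del_indep indep e) A = rk indep A.
Proof.
move=> eNA; apply: eq_bigl => I; rewrite /del_indep.
by case sIA: (I \subset A); rewrite //= (contra (subsetP sIA e) eNA) andbT.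
Qed.

Lemma cl_del (T : finType) (E : {set T}) (indep : {set T} -> bool) e (A : {set T}) :
  e \notin A -> cl (del_ground E e) (del_indep indep e) A = cl E indep A :\ e.
Proof.
move=> eNA; apply/setP => x; rewrite /cl !inE.
case: eqP => [-> // | /eqP xNe] /=.
by rewrite !rk_del // in_setU1 negb_or eq_sym xNe.
Qed.

Lemma antichainP (T : finType) (A : {set {set T}}) :
  reflect {in A &, forall X Y : {set T}, X \subset Y -> X = Y} (is_antichain A).
Proof.
apply: (iffP forall_inP) => [antiA X Y XA YA sXY | antiA X XA].
  by move/forall_inP: (antiA X XA) => /(_ Y YA); rewrite sXY => /eqP.
by apply/forall_inP => Y YA; apply/implyP => /(antiA _ _ XA YA) ->.
Qed.

Section Deletion.
Variables (T : finType) (E : {set T}) (indep : {set T} -> bool).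
Variables (G : {set {set T}}) (e : T).

Local Notation clM := (cl E indep).
Local Notation Ee := (del_ground E e).
Local Notation indep_e := (del_indep indep e).
Local Notation Ge := (del_building E indep G e).

Lemma del_buildingP (S : {set T}) :
  S \in Ge -> [/\ e \notin S, S \subset E, clM S \in G & clM S :\ e = S].
Proof.
rewrite inE /is_flat => /andP[/andP[sSEe /eqP clS_S] clSG].
have eNS : e \notin S by apply/negP => /(subsetP sSEe); rewrite !inE eqxx.
split=> //; first exact: subset_trans sSEe (subsetDl _ _).
by rewrite -cl_del.
Qed.

Lemma del_building_cl_inj : {in Ge &, injective clM}.
Proof.
move=> S S' /del_buildingP[_ _ _ clSK] /del_buildingP[_ _ _ clS'K] eq_cl.
by rewrite -clSK -clS'K eq_cl.
Qed.

Lemma del_building_cl_inj_on (B : {set {set T}}) :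
  B \subset Ge -> {in B &, injective clM}.
Proof. by move=> /subsetP sBGe X Y /sBGe XGe /sBGe; apply: del_building_cl_inj. Qed.

Hypothesis hM : is_matroid E indep.

Lemma del_building_clS (S S' : {set T}) : S \in Ge -> S' \in Ge ->
  (clM S \subset clM S') = (S \subset S').
Proof.
move=> /del_buildingP[_ _ _ clSK] /del_buildingP[_ _ _ clS'K].
by apply/idP/idP => [sub | /(clS hM)//]; rewrite -clSK -clS'K setSD.
Qed.

Lemma del_building_antichain (A : {set {set T}}) : A \subset Ge ->
  is_antichain (clM @: A) = is_antichain A.
Proof.
move=> /subsetP sAGe; apply/antichainP/antichainP => [antiA S S' SA S'A sSS' |
    antiA _ _ /imsetP[S SA ->] /imsetP[S' S'A ->]].
  apply: del_building_cl_inj; rewrite ?sAGe //.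
  by apply: antiA; rewrite ?imset_f ?(clS hM).
by rewrite del_building_clS ?sAGe // => /antiA ->.
Qed.

Lemma del_building_fjoin (B : {set {set T}}) : B \subset Ge ->
  (fjoin Ee indep_e B \in Ge) = (fjoin E indep (clM @: B) \in G).
Proof.
move=> /subsetP sBGe; set U := \bigcup_(S in B) S.
have eNU : e \notin U.
  by apply/bigcupP => -[S /sBGe /del_buildingP[eNS _ _ _] eS]; rewrite eS in eNS.
have sUE : U \subset E.
  by apply/bigcupsP => S /sBGe /del_buildingP[].
have joinB : fjoin Ee indep_e B = clM U :\ e by rewrite /fjoin cl_del.
have joinclB : fjoin E indep (clM @: B) = clM U.
  apply: cl_between => //; apply/bigcupsP.
    move=> S SB; have [_ sSE _ _] := del_buildingP (sBGe S SB).
    by apply: (bigcup_max (clM S)); [apply: imset_f | apply: subset_cl].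
  by move=> _ /imsetP[S SB ->]; apply: clS => //; apply: bigcup_sup.
have clUe : clM (clM U :\ e) = clM U.
  apply: (cl_between hM); last exact: subsetDl.
  apply/subsetP => x Ux; rewrite in_setD1 mem_cl ?(subsetP sUE) // andbT.
  by apply: contraNneq eNU => <-.
rewrite joinB joinclB inE /is_flat cl_del ?setD11 // clUe eqxx andbT.
by rewrite setSD ?cl_sub_ground.
Qed.

Lemma del_building_nested (S : {set {set T}}) : S \subset Ge ->
  is_nested Ee indep_e Ge S <-> is_nested E indep G (clM @: S).
Proof.
move=> sSGe; have clSG : clM @: S \subset G.
  by apply/subsetP => _ /imsetP[X /(subsetP sSGe) /del_buildingP[] _ _ ? _ ->].
split=> [[_ nestS] | [_ nestclS]]; split=> //.
- move=> A0 sA0 antiA0 B0 sB0 B0ge2.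
  set A := S :&: clM @^-1: A0; set B := A :&: clM @^-1: B0.
  have A0E : clM @: A = A0 by apply: imset_preimsetI.
  have B0E : clM @: B = B0 by apply: imset_preimsetI; rewrite A0E.
  have sAGe : A \subset Ge := subset_trans (subsetIl _ _) sSGe.
  have sBGe : B \subset Ge := subset_trans (subsetIl _ _) sAGe.
  rewrite -B0E -del_building_fjoin //.
  apply: (nestS A (subsetIl _ _) _ B (subsetIl _ _)).
    by rewrite -del_building_antichain // A0E.
  by rewrite -(card_in_imset (del_building_cl_inj_on sBGe)) B0E.
- move=> A sAS antiA B sBA Bge2.
  have sBGe : B \subset Ge := subset_trans sBA (subset_trans sAS sSGe).
  rewrite del_building_fjoin //.
  apply: (nestclS (clM @: A) (imsetS _ sAS) _ _ (imsetS _ sBA)).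
    by rewrite del_building_antichain // (subset_trans sAS).
  by rewrite (card_in_imset (del_building_cl_inj_on sBGe)).
Qed.

Lemma del_building_nonmax (S : {set T}) :
  S \in Ge :\: maxG Ge -> clM S \in G :\: maxG G.
Proof.
rewrite !in_setD => /andP[nmaxS SGe]; have [_ _ clSG _] := del_buildingP SGe.
move: nmaxS; rewrite clSG andbT /maxG in_set SGe /= => /forall_inPn[S' S'Ge].
rewrite negb_imply => /andP[sSS' S'neS]; rewrite in_set clSG /=.
have [_ _ clS'G _] := del_buildingP S'Ge.
apply/forall_inPn; exists (clM S') => //; rewrite negb_imply clS //=.
by apply: contra S'neS => /eqP/(del_building_cl_inj S'Ge SGe) ->; rewrite eqxx.
Qed.

End Deletion.

Theorem lemma3p18 (T : finType) (E : {set T}) (indep : {set T} -> bool)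
  (G : {set {set T}}) (e : T) :
  is_matroid E indep -> is_simple E indep ->
  is_building E indep G -> is_flag E indep G ->
  e \in E ->
  is_flag (del_ground E e) (del_indep indep e) (del_building E indep G e).
Proof.
move=> hM _ _ flagG _ X sX notnestX minnestX.
have sXGe := subset_trans sX (subsetDl _ (maxG _)).
rewrite -(card_in_imset (del_building_cl_inj_on sXGe)).
apply: flagG.
- apply/subsetP => _ /imsetP[S SX ->].
  exact: del_building_nonmax (subsetP sX S SX).
- by move/(del_building_nested hM sXGe).
- move=> _ /proper_imsetP[W ltWX ->].
  apply/(del_building_nested hM (subset_trans (proper_sub ltWX) sXGe)).
  exact: minnestX.
Qed.
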